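(* Let $W=I_2(5)$. Then $$\kappa^{(3)}_{\beta,\alpha}=S^{(0,3)}_\beta(y_\alpha y_\beta)-y_\alpha\,s_\beta s_\alpha s_\beta(y_\alpha),$$ $$\kappa^{(2)}_{\alpha,\beta}=-y_\beta\big\{s_\alpha(y_\alpha y_\beta)+s_\alpha s_\beta(y_\alpha y_\beta)-s_\beta s_\alpha(y_\alpha y_\beta)-s_\beta s_\alpha s_\beta(y_\alpha y_\beta)+y_\alpha s_\beta s_\alpha s_\beta(y_\alpha)-s_\alpha s_\beta(y_\alpha)\,s_\alpha s_\beta s_\alpha(y_\beta)\big\},$$ $$\begin{aligned}\kappa^{(1)}_{\beta,\alpha}=&-s_\beta(y_\alpha y_\beta)\,s_\beta s_\alpha s_\beta(y_\alpha)\big\{s_\beta s_\alpha s_\beta(y_\beta)-y_\alpha\big\}-y_\alpha y_\beta\,s_\alpha s_\beta(y_\alpha)\big\{s_\alpha s_\beta(y_\beta)-s_\alpha s_\beta s_\alpha(y_\beta)\big\}\\&-y_\alpha\,s_\beta(y_\alpha)\,s_\beta s_\alpha(y_\beta)\,s_\beta s_\alpha s_\beta(y_\alpha).\end{aligned}$$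
   Context: General setup: $W$ a finite real reflection group with root system $\Sigma$; $R$ an integral domain containing the ring $\mathcal{R}\subset\mathbb{R}$ generated by the coefficients of roots in the basis of simple roots; $F$ a one-dimensional commutative formal group law over $R$; $\mathcal{S}$ the formal root algebra (the quotient of the completed polynomial ring $R[[x_\lambda:\lambda\in\Lambda]]$, $\Lambda$ the lattice spanned by $\mathcal{R}$-multiples of roots, by the closed ideal generated by $x_0$ and the relations $x_{e_i\gamma+e_j\gamma'}=(e_ix_\gamma)+_F(e_jx_{\gamma'})$ for roots $\gamma,\gamma'$ and a fixed $\mathbb{Z}$-basis $(e_1=1,\dots,e_l)$ of $\mathcal{R}$), with $W$ acting by $w(x_\lambda)=x_{w(\lambda)}$; $\mathcal{Q}$ its localization at all $x_\gamma$; $\mathcal{Q}_W=\mathcal{Q}\otimes_RR[W]$ with left $\mathcal{Q}$-basis $\{\delta_w\}$ and product $(q\delta_w)(q'\delta_{w'})=q\,w(q')\delta_{ww'}$, $\mathbf 1=\delta_1$; $\delta_\gamma=\delta_{s_\gamma}$, $X_\gamma=\frac1{x_\gamma}(\mathbf 1-\delta_\gamma)$. Dihedral notation: $W=I_2(m)$ (here $m=5$), simple roots $\alpha,\beta$; $y_\gamma=1/x_\gamma\in\mathcal{Q}$; $W$ acts on products multiplicatively, $s(y_\gamma)=y_{s(\gamma)}$. $X^{(i)}_{\alpha\ldots}=X_\alpha X_\beta X_\alpha\cdots$ and $X^{(i)}_{\beta\ldots}$ ($i$ alternating factors); $s^{(i)}_{\beta\ldots}=s_\beta s_\alpha\cdots$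 ($i$ factors, identity for $i=0$); $S^{(0,3)}_\beta(u)=\sum_{k=0}^3s^{(k)}_{\beta\ldots}(u)$. The elements $\kappa^{(i)}_{\alpha,\beta},\kappa^{(i)}_{\beta,\alpha}\in\mathcal{Q}$ ($1\le i\le m-2$) are the unique elements with $X^{(m)}_{\alpha\ldots}-X^{(m)}_{\beta\ldots}=\sum_{i=1}^{m-2}\big(\kappa^{(i)}_{\alpha,\beta}X^{(i)}_{\alpha\ldots}-\kappa^{(i)}_{\beta,\alpha}X^{(i)}_{\beta\ldots}\big)$ (uniqueness holds because the elements $X_{I_w}$, one reduced sequence $I_w$ per $w\in W$, are linearly independent over $\mathcal{Q}$). *)

From HB Require Import structures.
From mathcomp Require Import all_boot all_order all_algebra all_fingroup.
Set Implicit Arguments. Unset Strict Implicit. Unset Printing Implicit Defensive.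
Import GRing.Theory.
Local Open Scope ring_scope.

(* The root system Sigma of I_2(5).  The root with index k : 'I_10 is the *)
(* unit vector at angle k*pi/5; the simple roots are alpha = index 0 and    *)
(* beta = index 4 (angle 4pi/5); the positive roots are indices 0..4.      *)
(* The reflection s_gamma in the root of index k maps the root of index j  *)
(* to the root of index (2k + 5 - j) mod 10.                               *)
Definition Iroot := 'I_10.
Definition ra : Iroot := inord 0.
Definition rb : Iroot := inord 4.

Definition refl_nat (k j : nat) : nat := (2 * k + 15 - j) %% 10.

Definition refl_fun (k : Iroot) (j : Iroot) : Iroot :=
  Ordinal (ltn_pmod (refl_nat k j) (isT : (0 < 10)%N)).

Lemma refl_nat_all :
  all (fun k => all (fun j => refl_nat k (refl_nat k j) == j) (iota 0 10)) (iota 0 10).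
Proof. by []. Qed.

Lemma refl_funK (k : Iroot) : cancel (refl_fun k) (refl_fun k).
Proof.
move=> j; apply/val_inj => /=.
have /allP /(_ (val k)) := refl_nat_all.
have Hk : val k \in iota 0 10 by rewrite mem_iota add0n ltn_ord.
move=> /(_ Hk) /allP /(_ (val j)).
have Hj : val j \in iota 0 10 by rewrite mem_iota add0n ltn_ord.
move=> /(_ Hj) /eqP E; move: E; rewrite /refl_nat !modn_mod; exact.
Qed.

Lemma refl_inj (k : Iroot) : injective (refl_fun k).
Proof. exact: can_inj (refl_funK k). Qed.

Definition refl (k : Iroot) : {perm Iroot} := perm (@refl_inj k).
Definition sa : {perm Iroot} := refl ra.
Definition sb : {perm Iroot} := refl rb.

(* W = I_2(5), realised (faithfully) as the group of permutations of Sigma *)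
(* generated by s_alpha and s_beta.                                         *)
Definition W : {group {perm Iroot}} := <<[set sa; sb]>>%G.

(* composition in W in the usual (functional) order: (wc u v) g = u (v g). *)
(* (MathComp's permutation product is left-to-right.)                     *)
Definition wc (u v : {perm Iroot}) : {perm Iroot} := (v * u)%g.

Definition W_action (Q : comUnitRingType) (act : {perm Iroot} -> Q -> Q) : Prop :=
  [/\ forall w, w \in W -> forall a b, act w (a + b) = act w a + act w b,
      forall w, w \in W -> forall a b, act w (a * b) = act w a * act w b,
      forall w, w \in W -> act w 1 = 1,
      forall a, act 1%g a = a &
      forall u v, u \in W -> v \in W -> forall a, act (wc u v) a = act u (act v a)].

Section QW.
Variables (Q : comUnitRingType) (act : {perm Iroot} -> Q -> Q) (x : Iroot -> Q).

Definition y (g : Iroot) : Q := (x g)^-1.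

Fixpoint salt (a b : {perm Iroot}) (k : nat) (u : Q) : Q :=
  match k with 0 => u | k'.+1 => act a (salt b a k' u) end.

Definition Sb03 (u : Q) : Q := \sum_(k < 4) salt sb sa k u.

(* The twisted group algebra Q_W: an element sum_w q_w delta_w is stored   *)
(* as the function w |-> q_w.                                              *)
Definition QW := {ffun {perm Iroot} -> Q}.

Definition delta (w : {perm Iroot}) : QW := [ffun v => (v == w)%:R].
Definition qw_one : QW := delta 1%g.
Definition qw_add (f g : QW) : QW := [ffun v => f v + g v].
Definition qw_sub (f g : QW) : QW := [ffun v => f v - g v].
Definition qw_scale (q : Q) (f : QW) : QW := [ffun v => q * f v].
(* (q delta_u)(q' delta_v) = q u(q') delta_{uv} *)
Definition qw_mul (f g : QW) : QW :=
  [ffun v => \sum_(u in W) \sum_(u' in W | wc u u' == v) f u * act u (g u')].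

Definition XX (g : Iroot) : QW := qw_scale (y g) (qw_sub qw_one (delta (refl g))).

Fixpoint Xalt (a b : Iroot) (n : nat) : QW :=
  match n with 0 => qw_one | n'.+1 => qw_mul (XX a) (Xalt b a n') end.

(* The defining identity of kappa^{(i)}_{alpha,beta} (= kab i) and        *)
(* kappa^{(i)}_{beta,alpha} (= kba i), 1 <= i <= m - 2 = 3:                *)
Definition kappa_eq (kab kba : nat -> Q) : Prop :=
  qw_sub (Xalt ra rb 5) (Xalt rb ra 5) =
  \big[qw_add/[ffun => 0]]_(1 <= i < 4)
     qw_sub (qw_scale (kab i) (Xalt ra rb i)) (qw_scale (kba i) (Xalt rb ra i)).

End QW.

From HB Require Import structures.
From mathcomp Require Import all_boot all_order all_algebra all_fingroup.
From mathcomp Require Import ring.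
Set Implicit Arguments. Unset Strict Implicit. Unset Printing Implicit Defensive.
Import GRing.Theory.
Local Open Scope ring_scope.

(* Every element of Q_W is a Q-linear combination of the ten
   deltas, so the defining identity of the kappas is equivalent to the ten
   coefficient identities obtained by evaluating both sides at each w in W.
   We compute with finite formal sums sum_k q_k delta_{w_k}, stored as lists
   of pairs (q_k, w_k), whose product is the twisted product of Q_W; the
   products X^(i) then become explicit lists whose coefficients are products
   of the y_gamma, after normalising words in s_alpha, s_beta (involutions and
   the braid relation) and computing the reflected roots.
   - Existence: an explicit pair (kab0, kba0) satisfies all ten coefficient
     identities (a polynomial identity in the y_gamma and in the delta
     indicators, proved by [ring]).
   - Uniqueness: evaluated at s_a s_b s_a, s_b s_a s_b, s_a s_b, s_b s_a and
     s_b, the X^(i) form a triangular system whose diagonal entries are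
     products of the units y_gamma; hence the difference of two solutions
     vanishes at the indices asked for.
   - Finally the explicit values of kab0, kba0 are rewritten into the form of
     the statement, again by normalisation and [ring]. *)

Arguments wc : simpl never.
Arguments y : simpl never.
Arguments refl : simpl never.
Arguments sa : simpl never.
Arguments sb : simpl never.

Lemma wc1l (u : {perm Iroot}) : wc 1%g u = u. Proof. by rewrite /wc mulg1. Qed.
Lemma wc1r (u : {perm Iroot}) : wc u 1%g = u. Proof. by rewrite /wc mul1g. Qed.
Lemma wcA (u v w : {perm Iroot}) : wc u (wc v w) = wc (wc u v) w.
Proof. by rewrite /wc mulgA. Qed.

Lemma reflK (k : Iroot) : wc (refl k) (refl k) = 1%g.
Proof. by apply/permP => i; rewrite /wc permM !permE refl_funK. Qed.

Lemma saa : wc sa sa = 1%g. Proof. exact: reflK. Qed.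
Lemma sbb : wc sb sb = 1%g. Proof. exact: reflK. Qed.
Lemma saK (u : {perm Iroot}) : wc sa (wc sa u) = u.
Proof. by rewrite wcA saa wc1l. Qed.
Lemma sbK (u : {perm Iroot}) : wc sb (wc sb u) = u.
Proof. by rewrite wcA sbb wc1l. Qed.

Lemma reflE (k j : Iroot) : val (refl k j) = refl_nat k j.
Proof. by rewrite /refl permE /= /refl_nat modn_mod. Qed.

Lemma braid : wc sb (wc sa (wc sb (wc sa sb))) = wc sa (wc sb (wc sa (wc sb sa))).
Proof.
apply/permP => i; rewrite /wc !permM; apply/val_inj.
rewrite !reflE /refl_nat /ra /rb !inordK //.
by case: i => [[|[|[|[|[|[|[|[|[|[|//]]]]]]]]]] ?].
Qed.

Lemma sa_in : sa \in W. Proof. by rewrite mem_gen // !inE eqxx. Qed.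
Lemma sb_in : sb \in W. Proof. by rewrite mem_gen // !inE eqxx orbT. Qed.
Lemma wc_in (u v : {perm Iroot}) : u \in W -> v \in W -> wc u v \in W.
Proof. by move=> Hu Hv; rewrite /wc groupM. Qed.

Lemma sa_inord (j : nat) : (j < 10)%N -> sa (inord j) = inord (refl_nat 0 j).
Proof. by move=> Hj; apply/val_inj => /=; rewrite /sa reflE !inordK ?ltn_pmod. Qed.
Lemma sb_inord (j : nat) : (j < 10)%N -> sb (inord j) = inord (refl_nat 4 j).
Proof. by move=> Hj; apply/val_inj => /=; rewrite /sb reflE !inordK ?ltn_pmod. Qed.

Ltac eval_roots :=
  repeat (first [rewrite sa_inord // | rewrite sb_inord //];
          repeat match goal with |- context [refl_nat ?k ?j] =>
            let v := eval compute in (refl_nat k j) in change (refl_nat k j) with v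
          end).

Lemma perm_neq_at_ra (u w : {perm Iroot}) : u ra != w ra -> (u == w) = false.
Proof. by move=> H; apply/negbTE; apply: contra H => /eqP ->. Qed.

Lemma sum_range13 (V : nmodType) (F : nat -> V) :
  \sum_(1 <= i < 4) F i = F 1%N + F 2%N + F 3%N.
Proof. by rewrite big_ltn // big_ltn // big_ltn // big_geq // addr0 !addrA. Qed.

Section Kappa.
Variables (Q : comUnitRingType) (act : {perm Iroot} -> Q -> Q) (x : Iroot -> Q).
Hypothesis Hact : W_action act.
Hypothesis Hunit : forall g : Iroot, x g \is a GRing.unit.
Hypothesis Hequiv : forall w, w \in W -> forall g : Iroot, act w (x g) = x (w g).

Lemma actD w : w \in W -> forall a b, act w (a + b) = act w a + act w b.
Proof. by case: Hact => H _ _ _ _; apply: H. Qed.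
Lemma actM w : w \in W -> forall a b, act w (a * b) = act w a * act w b.
Proof. by case: Hact => _ H _ _ _; apply: H. Qed.
Lemma act1 w : w \in W -> act w 1 = 1.
Proof. by case: Hact => _ _ H _ _; apply: H. Qed.
Lemma act_id a : act 1%g a = a.
Proof. by case: Hact => _ _ _ H _; apply: H. Qed.

Lemma act0 w : w \in W -> act w 0 = 0.
Proof. by move=> Hw; apply: (addrI (act w 0)); rewrite -actD // !addr0. Qed.
Lemma actN w : w \in W -> forall a, act w (- a) = - act w a.
Proof.
by move=> Hw a; apply/eqP; rewrite -subr_eq0 opprK -actD // addNr act0.
Qed.
Lemma act_nat w (b : bool) : w \in W -> act w b%:R = b%:R.
Proof. by move=> Hw; case: b; rewrite ?act1 ?act0. Qed.
Lemma act_sum w (I : Type) (s : seq I) (F : I -> Q) :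
  w \in W -> act w (\sum_(i <- s) F i) = \sum_(i <- s) act w (F i).
Proof. by move=> Hw; apply: (big_morph _ (actD Hw) (act0 Hw)). Qed.

Lemma acty w : w \in W -> forall g, act w (y x g) = y x (w g).
Proof.
move=> Hw g; rewrite /y.
have inv_xwg : act w (x g)^-1 * x (w g) = 1.
  by rewrite -Hequiv // -actM // mulVr ?act1.
by rewrite -[LHS]mulr1 -(mulrV (Hunit (w g))) mulrA inv_xwg mul1r.
Qed.

Lemma y_unit g : y x g \is a GRing.unit.
Proof. by rewrite /y unitrV. Qed.

Definition term := (Q * {perm Iroot})%type.

Definition qw_of (L : seq term) : QW Q :=
  [ffun v => \sum_(p <- L) p.1 * (v == p.2)%:R].

Definition in_W (p : term) : bool := p.2 \in W.

(* (sum_k q_k delta_{u_k}) (sum_l q'_l delta_{v_l}) = sum_{k,l} q_k u_k(q'_l) delta_{u_k v_l} *)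
Fixpoint list_mul (L1 L2 : seq term) : seq term :=
  match L1 with
  | [::] => [::]
  | p :: L1' => map (fun q => (p.1 * act p.2 q.1, wc p.2 q.2)) L2 ++ list_mul L1' L2
  end.

Lemma qw_ofE (L : seq term) v : qw_of L v = \sum_(p <- L) p.1 * (v == p.2)%:R.
Proof. by rewrite ffunE. Qed.

Lemma qw_of_cat (L1 L2 : seq term) : qw_of (L1 ++ L2) = qw_add (qw_of L1) (qw_of L2).
Proof. by apply/ffunP => v; rewrite !ffunE big_cat. Qed.

Lemma qw_mulDl (f g h : QW Q) :
  qw_mul act (qw_add f g) h = qw_add (qw_mul act f h) (qw_mul act g h).
Proof.
apply/ffunP => v; rewrite !ffunE -big_split; apply: eq_bigr => u _.
by rewrite -big_split; apply: eq_bigr => u' _; rewrite ffunE mulrDl.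
Qed.

(* All group elements occurring stay in W, where the action is a ring map. *)
Lemma list_mul_in_W (L1 L2 : seq term) :
  all in_W L1 -> all in_W L2 -> all in_W (list_mul L1 L2).
Proof.
elim: L1 => [|p L1 IH] //= /andP [Hp H1] H2; rewrite all_cat IH // andbT.
apply/allP => q /mapP [q' Hq' ->]; rewrite /in_W /= wc_in //.
by move/allP: H2 => /(_ q' Hq').
Qed.

Lemma qw_mul_term (p : term) (L : seq term) : in_W p -> all in_W L ->
  qw_mul act (qw_of [:: p]) (qw_of L)
  = qw_of (map (fun q => (p.1 * act p.2 q.1, wc p.2 q.2)) L).
Proof.
move=> Hp HL; apply/ffunP => v; rewrite !ffunE big_map.
rewrite (bigD1 p.2) //= [X in _ + X]big1 ?addr0; last first.
  move=> u /andP [_ Hu]; apply: big1 => u' _.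
  by rewrite ffunE big_cons big_nil (negbTE Hu) mulr0 addr0 mul0r.
rewrite ffunE big_cons big_nil eqxx mulr1 addr0.
under eq_bigr => u' _ do rewrite ffunE (act_sum _ _ Hp) mulr_sumr.
rewrite exchange_big /=; apply: eq_big_seq => q Hq.
have HqW : q.2 \in W by move/allP: HL => /(_ q Hq).
under eq_bigr => u' _ do rewrite actM // act_nat // mulrA.
rewrite eq_sym; case: (boolP (wc p.2 q.2 == v)) => Hv.
  rewrite (bigD1 q.2) /=; last by rewrite HqW.
  rewrite eqxx mulr1 [X in _ + X]big1 ?addr0 // => u' /andP [_ Hne].
  by rewrite (negbTE Hne) mulr0.
rewrite big1 ?mulr0 // => u' /andP [_ Hu'].
by case: (eqVneq u' q.2) Hu' => [-> | _ _]; [rewrite (negbTE Hv) | rewrite mulr0].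
Qed.

Lemma qw_mul_list (L1 L2 : seq term) : all in_W L1 -> all in_W L2 ->
  qw_mul act (qw_of L1) (qw_of L2) = qw_of (list_mul L1 L2).
Proof.
elim: L1 => [|p L1 IH] H1 H2.
  apply/ffunP => v; rewrite !ffunE /= big_nil big1 // => u _; apply: big1 => u' _.
  by rewrite ffunE big_nil mul0r.
case/andP: H1 => Hp H1.
by rewrite -cat1s qw_of_cat qw_mulDl qw_mul_term // IH //= qw_of_cat.
Qed.

Definition X_list (g : Iroot) : seq term := [:: (y x g, 1%g); (- y x g, refl g)].

Fixpoint Xalt_list (a b : Iroot) (n : nat) : seq term :=
  match n with
  | 0 => [:: (1, 1%g)]
  | n'.+1 => list_mul (X_list a) (Xalt_list b a n')
  end.

Lemma XX_list g : XX x g = qw_of (X_list g).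
Proof.
apply/ffunP => v; rewrite /XX /qw_scale /qw_sub /qw_one /delta !ffunE /=.
by rewrite !big_cons big_nil /=; ring.
Qed.

Lemma Xalt_listE n : forall a b, refl a \in W -> refl b \in W ->
  Xalt act x a b n = qw_of (Xalt_list a b n) /\ all in_W (Xalt_list a b n).
Proof.
elim: n => [|n IH] a b Ha Hb.
  split; last by rewrite /= /in_W /= group1.
  by apply/ffunP => v; rewrite /qw_one /delta !ffunE big_cons big_nil /=; ring.
have [E1 E2] := IH b a Hb Ha.
have HX : all in_W (X_list a) by rewrite /= /in_W /= group1 Ha.
split; last exact: list_mul_in_W.
by rewrite /= E1 XX_list qw_mul_list.
Qed.

Lemma Xalt_ab n : Xalt act x ra rb n = qw_of (Xalt_list ra rb n).
Proof. by have [-> _] := Xalt_listE n sa_in sb_in. Qed.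
Lemma Xalt_ba n : Xalt act x rb ra n = qw_of (Xalt_list rb ra n).
Proof. by have [-> _] := Xalt_listE n sb_in sa_in. Qed.

Definition coef_eq (kab kba : nat -> Q) (v : {perm Iroot}) : Prop :=
  qw_of (Xalt_list ra rb 5) v - qw_of (Xalt_list rb ra 5) v =
  \sum_(1 <= i < 4)
     (kab i * qw_of (Xalt_list ra rb i) v - kba i * qw_of (Xalt_list rb ra i) v).

Lemma eval_qw_big (r : seq nat) (P : pred nat) (F : nat -> QW Q) v :
  (\big[@qw_add Q/[ffun => 0]]_(i <- r | P i) F i) v = \sum_(i <- r | P i) F i v.
Proof. by apply: (big_morph (fun f : QW Q => f v)) => [f g|]; rewrite ffunE. Qed.

Lemma kappa_eqE (kab kba : nat -> Q) :
  kappa_eq act x kab kba <-> forall v, coef_eq kab kba v.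
Proof.
rewrite /kappa_eq /coef_eq !Xalt_ab !Xalt_ba.
under eq_bigr => i _ do rewrite Xalt_ab Xalt_ba.
set S := \big[_/_]_(_ <= _ < _) _.
have SE v : S v = \sum_(1 <= i < 4)
    (kab i * qw_of (Xalt_list ra rb i) v - kba i * qw_of (Xalt_list rb ra i) v).
  by rewrite eval_qw_big; apply: eq_bigr => i _; rewrite !ffunE.
split => [H v | H]; first by rewrite -SE -H [RHS]ffunE.
by apply/ffunP => v; rewrite SE [LHS]ffunE H.
Qed.

Local Notation yr k := (y x (inord k)).

Ltac normalize :=
  rewrite ?big_cons ?big_nil /= -/sa -/sb ?act_id;
  repeat rewrite ?(actM sa_in) ?(actM sb_in) ?(actN sa_in) ?(actN sb_in)
    ?(actD sa_in) ?(actD sb_in) ?(act1 sa_in) ?(act1 sb_in)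
    ?(acty sa_in) ?(acty sb_in);
  rewrite /ra /rb; eval_roots;
  repeat rewrite ?wc1l ?wc1r ?saK ?sbK ?saa ?sbb ?braid.

(* Decide the equalities between normalised words by evaluation at alpha. *)
Ltac decide_word_eqs :=
  repeat (rewrite eqxx || match goal with |- context [?u == ?w] =>
    rewrite (@perm_neq_at_ra u w); last by
      rewrite /wc ?permM ?perm1 /ra; eval_roots;
      apply/eqP => /(congr1 val); rewrite /= !inordK end).

Ltac simplify_zeros :=
  repeat rewrite ?mulr0 ?mul0r ?oppr0 ?subr0 ?sub0r ?addr0 ?add0r.

Ltac eval_coefs :=
  rewrite ?qw_ofE /=; normalize; decide_word_eqs;
  rewrite /= ?mulr1n ?mulr0n ?mulr1; simplify_zeros.

Definition kab0 (i : nat) : Q :=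
  match i with
  | 3 => yr 3 * yr 7 - yr 3 * yr 4 + yr 2 * yr 6 + yr 1 * yr 5 + yr 0 * yr 4
  | 2 => yr 2 * yr 4 * yr 8 - yr 2 * yr 4 * yr 6 + yr 2 * yr 3 * yr 4
         + yr 1 * yr 4 * yr 7 - yr 1 * yr 4 * yr 5 - yr 0 * yr 1 * yr 4
  | 1 => - (yr 1 * yr 3 * yr 5 * yr 7) + yr 1 * yr 3 * yr 4 * yr 5
         - yr 1 * yr 2 * yr 3 * yr 4 - yr 0 * yr 2 * yr 4 * yr 8
         + yr 0 * yr 1 * yr 2 * yr 4
  | _ => 0
  end.
Definition kba0 (i : nat) : Q :=
  match i with
  | 3 => yr 3 * yr 9 + yr 2 * yr 8 + yr 1 * yr 7 + yr 0 * yr 4 - yr 0 * yr 1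
  | 2 => - (yr 0 * yr 3 * yr 9) + yr 0 * yr 3 * yr 7 - yr 0 * yr 3 * yr 4
         - yr 0 * yr 2 * yr 8 + yr 0 * yr 2 * yr 6 + yr 0 * yr 1 * yr 2
  | 1 => - (yr 1 * yr 3 * yr 7 * yr 9) - yr 0 * yr 2 * yr 4 * yr 6
         + yr 0 * yr 2 * yr 3 * yr 4 + yr 0 * yr 1 * yr 3 * yr 9
         - yr 0 * yr 1 * yr 2 * yr 3
  | _ => 0
  end.

Lemma kappa0_coef_eq v : coef_eq kab0 kba0 v.
Proof. by rewrite /coef_eq sum_range13 !qw_ofE /=; normalize; ring. Qed.

Definition homog_coef (dab dba : nat -> Q) (v : {perm Iroot}) : Prop :=
  \sum_(1 <= i < 4)
     (dab i * qw_of (Xalt_list ra rb i) v - dba i * qw_of (Xalt_list rb ra i) v) = 0.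

Lemma coef_eq_diff (kab kba kab' kba' : nat -> Q) v :
  coef_eq kab kba v -> coef_eq kab' kba' v ->
  homog_coef (fun i => kab i - kab' i) (fun i => kba i - kba' i) v.
Proof.
rewrite /coef_eq /homog_coef => E E'.
rewrite -[RHS](subrr (qw_of (Xalt_list ra rb 5) v - qw_of (Xalt_list rb ra 5) v)).
by rewrite {1}E E' -sumrB; apply: eq_bigr => i _; ring.
Qed.

Lemma unit_mulr_eq0 (a c : Q) : c \is a GRing.unit -> a * c = 0 -> a = 0.
Proof. by move=> Hc E; apply: (mulIr Hc); rewrite E mul0r. Qed.

Ltac pivot :=
  simplify_zeros; move/eqP; rewrite ?oppr_eq0 => /eqP /unit_mulr_eq0;
  apply; rewrite ?unitrM ?unitrN ?y_unit.

(* Uniqueness: at s_a s_b s_a, s_b s_a s_b, s_a s_b, s_b s_a and s_b the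
   X^(i) form a triangular system with unit diagonal. *)
Lemma homog_triangular (dab dba : nat -> Q) :
  (forall v, homog_coef dab dba v) -> [/\ dba 3 = 0, dab 2 = 0 & dba 1 = 0].
Proof.
move=> H.
have d3a : dab 3 = 0.
  by move: (H (wc sa (wc sb sa))); rewrite /homog_coef sum_range13; eval_coefs; pivot.
have d3b : dba 3 = 0.
  by move: (H (wc sb (wc sa sb))); rewrite /homog_coef sum_range13; eval_coefs; pivot.
have d2a : dab 2 = 0.
  move: (H (wc sa sb)); rewrite /homog_coef sum_range13; eval_coefs.
  by rewrite d3a d3b; pivot.
have d2b : dba 2 = 0.
  move: (H (wc sb sa)); rewrite /homog_coef sum_range13; eval_coefs.
  by rewrite d3a d3b; pivot.
have d1b : dba 1 = 0.
  move: (H sb); rewrite /homog_coef sum_range13; eval_coefs.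
  by rewrite d3a d3b d2a d2b; pivot.
by [].
Qed.
Lemma kba0_3 : kba0 3 = Sb03 act (y x ra * y x rb) - y x ra * salt act sb sa 3 (y x ra).
Proof. by rewrite /Sb03 !big_ord_recr big_ord0 /=; normalize; rewrite /kba0; ring. Qed.

Lemma kab0_2 : kab0 2 =
  - (y x rb * (salt act sa sb 1 (y x ra * y x rb) + salt act sa sb 2 (y x ra * y x rb)
               - salt act sb sa 2 (y x ra * y x rb) - salt act sb sa 3 (y x ra * y x rb)
               + y x ra * salt act sb sa 3 (y x ra)
               - salt act sa sb 2 (y x ra) * salt act sa sb 3 (y x rb))).
Proof. by rewrite /=; normalize; rewrite /kab0; ring. Qed.

Lemma kba0_1 : kba0 1 =
  - (salt act sb sa 1 (y x ra * y x rb) * salt act sb sa 3 (y x ra)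
       * (salt act sb sa 3 (y x rb) - y x ra))
  - y x ra * y x rb * salt act sa sb 2 (y x ra)
       * (salt act sa sb 2 (y x rb) - salt act sa sb 3 (y x rb))
  - y x ra * salt act sb sa 1 (y x ra) * salt act sb sa 2 (y x rb)
       * salt act sb sa 3 (y x ra).
Proof. by rewrite /=; normalize; rewrite /kba0; ring. Qed.

End Kappa.

Theorem mainTheorem16 (Q : comUnitRingType) (act : {perm Iroot} -> Q -> Q) (x : Iroot -> Q)
  (Hact : W_action act)
  (Hunit : forall g : Iroot, x g \is a GRing.unit)
  (Hequiv : forall w, w \in W -> forall g : Iroot, act w (x g) = x (w g)) :
  (exists kab kba : nat -> Q, kappa_eq act x kab kba) /\
  (forall kab kba : nat -> Q, kappa_eq act x kab kba ->
    [/\ kba 3%N =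
          Sb03 act (y x ra * y x rb) - y x ra * salt act sb sa 3 (y x ra),
        kab 2%N =
          - (y x rb * (salt act sa sb 1 (y x ra * y x rb)
                       + salt act sa sb 2 (y x ra * y x rb)
                       - salt act sb sa 2 (y x ra * y x rb)
                       - salt act sb sa 3 (y x ra * y x rb)
                       + y x ra * salt act sb sa 3 (y x ra)
                       - salt act sa sb 2 (y x ra) * salt act sa sb 3 (y x rb)))
      & kba 1%N =
          - (salt act sb sa 1 (y x ra * y x rb) * salt act sb sa 3 (y x ra)
               * (salt act sb sa 3 (y x rb) - y x ra))
          - y x ra * y x rb * salt act sa sb 2 (y x ra)
               * (salt act sa sb 2 (y x rb) - salt act sa sb 3 (y x rb))
          - y x ra * salt act sb sa 1 (y x ra) * salt act sb sa 2 (y x rb)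
               * salt act sb sa 3 (y x ra)]).
Proof.
have sol := kappa0_coef_eq Hact Hunit Hequiv.
split; first by exists (kab0 x), (kba0 x); apply/(kappa_eqE x Hact).
move=> kab kba /(kappa_eqE x Hact) Hk.
have [d3 d2 d1] := homog_triangular Hact Hunit Hequiv (fun v => coef_eq_diff (Hk v) (sol v)).
rewrite -(kba0_3 Hact Hunit Hequiv) -(kab0_2 Hact Hunit Hequiv) -(kba0_1 Hact Hunit Hequiv).
by split; apply/subr0_eq.
Qed.
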